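(* Let $\mathbb H=\mathbb R$ or $\mathbb C$, $\mathbf A\in\mathbb H^{m\times d}$, $\mathbf b\in\mathbb H^m$. Then neither $\mathbf M_{\mathbf A,\mathbf b}$ nor $\mathbf M^2_{\mathbf A,\mathbf b}$ is bi-Lipschitz on $\mathbb H^d$ (with respect to Euclidean norms).
   Context: For $\mathbf u,\mathbf v\in\mathbb H^d$, $\langle\mathbf u,\mathbf v\rangle=\sum_i\overline{u_i}v_i$. With $\mathbf A=(\mathbf a_1,\ldots,\mathbf a_m)^\top$ and $\mathbf b=(b_1,\ldots,b_m)^\top$, $\mathbf M_{\mathbf A,\mathbf b}(\mathbf x)=(|\langle\mathbf a_1,\mathbf x\rangle+b_1|,\ldots,|\langle\mathbf a_m,\mathbf x\rangle+b_m|)$ and $\mathbf M^2_{\mathbf A,\mathbf b}(\mathbf x)=(|\langle\mathbf a_1,\mathbf x\rangle+b_1|^2,\ldots,|\langle\mathbf a_m,\mathbf x\rangle+b_m|^2)$. A map $F$ is bi-Lipschitz on $\mathbb H^d$ if there are constants $0<c\le C$ with $c\|\mathbf x-\mathbf y\|\le\|F(\mathbf x)-F(\mathbf y)\|\le C\|\mathbf x-\mathbf y\|$ for all $\mathbf x,\mathbf y\in\mathbb H^d$. *)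

From mathcomp Require Import all_boot all_order all_algebra.
From mathcomp Require Import reals.
From mathcomp Require Export complex.
Set Implicit Arguments. Unset Strict Implicit. Unset Printing Implicit Defensive.
Import Order.TTheory GRing.Theory Num.Theory.
Local Open Scope ring_scope.

Section PhaseRetrievalDefs.
Variable R : realType.

Definition enorm (n : nat) (v : 'I_n -> R) : R := Num.sqrt (\sum_(i < n) v i ^+ 2).

(* H is R or C; absH is the modulus |.| : H -> R and conjH the conjugation. *)
Variables (H : comNzRingType) (absH : H -> R) (conjH : H -> H).

Definition Hnorm (d : nat) (x : 'I_d -> H) : R := enorm (fun i => absH (x i)).

Definition Hinner (d : nat) (u v : 'I_d -> H) : H := \sum_(i < d) conjH (u i) * v i.

Definition M_Ab (m d : nat) (A : 'M[H]_(m, d)) (b : 'I_m -> H) (x : 'I_d -> H)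
  : 'I_m -> R := fun k => absH (Hinner (fun j => A k j) x + b k).

Definition M2_Ab (m d : nat) (A : 'M[H]_(m, d)) (b : 'I_m -> H) (x : 'I_d -> H)
  : 'I_m -> R := fun k => absH (Hinner (fun j => A k j) x + b k) ^+ 2.

Definition bi_lipschitz (m d : nat) (F : ('I_d -> H) -> ('I_m -> R)) : Prop :=
  exists c C : R, 0 < c /\ c <= C /\
    forall x y : 'I_d -> H,
      c * Hnorm (fun i => x i - y i) <= enorm (fun k => F x k - F y k) /\
      enorm (fun k => F x k - F y k) <= C * Hnorm (fun i => x i - y i).

End PhaseRetrievalDefs.

Definition absR (R : realType) (x : R) : R := `|x|.
Definition conjR (R : realType) (x : R) : R := x.
Definition absC (R : realType) (z : R[i]) : R := Normc.normc z.
Definition conjC (R : realType) (z : R[i]) : R[i] := conjc z.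

From mathcomp Require Import all_boot all_order all_algebra.
From mathcomp Require Import reals complex.
From mathcomp Require Import ring lra.
Set Implicit Arguments. Unset Strict Implicit. Unset Printing Implicit Defensive.
Import Order.TTheory GRing.Theory Num.Theory.
Local Open Scope ring_scope.

(* Replacing x by -x changes each |<a_k, x> + b_k| by at most 2|b_k|, so M maps
   the pairs x, -x, which are arbitrarily far apart, to points within a fixed
   distance: M admits no lower Lipschitz bound.  For M^2, if some a_k has a
   nonzero j-th coordinate then along the j-th axis the k-th entry of M^2 grows
   quadratically, which defeats any upper Lipschitz bound; if A = 0 then M^2 is
   constant. *)

Section RealLemmas.
Variable R : realType.

Lemma enorm_le n (u w : 'I_n -> R) :
  (forall k, `|u k| <= w k) -> enorm u <= enorm w.
Proof.
move=> uw; rewrite /enorm ler_sqrt; last by apply: sumr_ge0 => i _; exact: sqr_ge0.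
apply: ler_sum => i _; rewrite -real_normK ?num_real //.
by rewrite lerXn2r ?nnegrE ?(le_trans (normr_ge0 _) (uw i)).
Qed.

Lemma normr_le_enorm n (u : 'I_n -> R) k : `|u k| <= enorm u.
Proof.
rewrite /enorm -sqrtr_sqr ler_sqrt; last by apply: sumr_ge0 => i _; exact: sqr_ge0.
by rewrite (bigD1 k) //= lerDl; apply: sumr_ge0 => i _; exact: sqr_ge0.
Qed.

Lemma enorm_supp1 n (v : 'I_n -> R) j :
  (forall i, i != j -> v i = 0) -> 0 <= v j -> enorm v = v j.
Proof.
move=> v0 vj0; rewrite /enorm (bigD1 j) //= big1 ?addr0 ?sqrtr_sqr ?ger0_norm //.
by move=> i /v0 ->; rewrite expr0n.
Qed.

Lemma nat_unbounded (c B : R) : 0 < c -> ~ (forall n : nat, c * n%:R <= B).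
Proof.
move=> c0 cnB; have B0 : 0 <= B by have := cnB 0%N; rewrite mulr0.
have := archi_boundP (divr_ge0 B0 (ltW c0)).
by rewrite ltr_pdivrMr // mulrC ltNge cnB.
Qed.

Lemma sqr_growth_bound (a b C N s : R) :
  0 < a -> 0 <= b -> 0 <= C -> 0 <= N ->
  a * N - b <= s -> s ^+ 2 - b ^+ 2 <= C * N -> a ^+ 2 * N <= C + 2 * a * b.
Proof.
move=> a0 b0 C0 N0 sge sle.
have [aNb|baN] := leP b (a * N); last first.
  have : a * (a * N) < a * b by rewrite ltr_pM2l.
  nra.
have [->|Npos] := eqVneq N 0; first by nra.
have {}N0 : 0 < N by rewrite lt_def Npos.
by rewrite -(ler_pM2r N0); nra.
Qed.

End RealLemmas.

Section AbsoluteValue.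
Variables (R : realType) (H : comNzRingType).

Record abs_value (absH : H -> R) : Prop := AbsValue {
  absv_ge0 : forall z, 0 <= absH z;
  absvN : forall z, absH (- z) = absH z;
  absvD : forall z w, absH (z + w) <= absH z + absH w;
  absvM : forall z w, absH (z * w) = absH z * absH w;
  absv_nat : forall n : nat, absH n%:R = n%:R;
  absv_gt0 : forall z, z != 0 -> 0 < absH z }.

Variables (absH : H -> R) (conjH : H -> H).
Hypothesis habs : abs_value absH.

Lemma absv0 : absH 0 = 0.
Proof. exact: (absv_nat habs 0). Qed.

Lemma absv_dist z w : `|absH z - absH w| <= absH (z - w).
Proof.
have tri u v : absH u - absH v <= absH (u - v).
  by rewrite lerBlDr -{1}(subrK v u) absvD.
by rewrite ler_norml tri andbT lerNl opprB -(absvN habs (z - w)) opprB tri.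
Qed.

Definition delta d (j : 'I_d) (a : H) : 'I_d -> H :=
  fun i => if i == j then a else 0.

Lemma Hnorm_supp1 d (x : 'I_d -> H) j :
  (forall i, i != j -> x i = 0) -> Hnorm absH x = absH (x j).
Proof.
move=> x0; rewrite /Hnorm (enorm_supp1 (j := j)) ?absv_ge0 //.
by move=> i /x0 ->; rewrite absv0.
Qed.

Lemma Hinner_delta d (u : 'I_d -> H) j a : Hinner conjH u (delta j a) = conjH (u j) * a.
Proof.
rewrite /Hinner (bigD1 j) //= big1 ?addr0 /delta ?eqxx // => i /negbTE ->.
by rewrite mulr0.
Qed.

Lemma HinnerN d (u x : 'I_d -> H) :
  Hinner conjH u (fun i => - x i) = - Hinner conjH u x.
Proof. by rewrite /Hinner -sumrN; apply: eq_bigr => i _; rewrite mulrN. Qed.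

Lemma Hinner0 d (u : 'I_d -> H) : Hinner conjH u (fun _ => 0) = 0.
Proof. by rewrite /Hinner big1 // => i _; rewrite mulr0. Qed.

Variables (m d : nat).
Hypothesis d_gt0 : (0 < d)%N.

Lemma const_not_bi_lipschitz (F : ('I_d -> H) -> 'I_m -> R) :
  (forall x y k, F x k = F y k) -> ~ bi_lipschitz absH F.
Proof.
move=> Fconst [c [C [c0 [_ Flip]]]].
pose x := delta (Ordinal d_gt0) 1.
have [lower _] := Flip x (fun _ => 0).
have : enorm (fun k => F x k - F (fun _ => 0) k) = 0.
  by rewrite /enorm big1 ?sqrtr0 // => k _; rewrite (Fconst _ x) subrr expr0n.
move: lower => /[swap] ->; rewrite (Hnorm_supp1 (j := Ordinal d_gt0)).
  by rewrite /x /delta eqxx subr0 (absv_nat habs 1) mulr1 leNgt c0.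
by move=> i; rewrite /x /delta subr0 => /negbTE ->.
Qed.

Lemma M_Ab_not_bi_lipschitz (A : 'M[H]_(m, d)) b :
  ~ bi_lipschitz absH (M_Ab absH conjH A b).
Proof.
move=> [c [C [c0 [_ Mlip]]]]; pose j := Ordinal d_gt0.
apply: (nat_unbounded (c := c *+ 2) (B := enorm (fun k => absH (b k + b k)))).
  by rewrite mulrn_wgt0.
move=> n; pose x := delta j (n%:R : H).
have [lower _] := Mlip x (fun i => - x i).
have -> : c *+ 2 * n%:R = c * Hnorm absH (fun i => x i - - x i).
  rewrite (Hnorm_supp1 (j := j)); last first.
    by move=> i; rewrite /x /delta => /negbTE ->; rewrite oppr0 subr0.
  by rewrite /x /delta eqxx opprK -natrD (absv_nat habs) natrD mulr2n mulrDl mulrDr.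
apply: (le_trans lower); apply: enorm_le => k.
rewrite /M_Ab HinnerN; set p := Hinner conjH _ x.
rewrite -(absvN habs (- p + b k)) opprD opprK.
have -> : b k + b k = p + b k - (p - b k) by ring.
exact: absv_dist.
Qed.

Lemma M2_Ab_not_bi_lipschitz_nz (A : 'M[H]_(m, d)) b k j :
  conjH (A k j) != 0 -> ~ bi_lipschitz absH (M2_Ab absH conjH A b).
Proof.
move=> Akj_nz [c [C [c0 [cC Mlip]]]].
set a := conjH (A k j); have a_gt0 := absv_gt0 habs Akj_nz.
apply: (nat_unbounded (c := absH a ^+ 2) (B := C + 2 * absH a * absH (b k))).
  exact: exprn_gt0.
move=> n; pose x := delta j (n%:R : H).
have [_ upper] := Mlip x (fun _ => 0).
have Hx : Hnorm absH (fun i => x i - 0) = n%:R.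
  rewrite (Hnorm_supp1 (j := j)) /x /delta ?eqxx ?subr0 ?(absv_nat habs) //.
  by move=> i /negbTE ->; rewrite subr0.
have := le_trans (normr_le_enorm _ k) upper.
rewrite Hx /M2_Ab Hinner_delta Hinner0 add0r -/a => /ler_normlP[_ growth].
apply: (sqr_growth_bound _ _ _ _ _ growth) => //.
- exact: absv_ge0.
- exact: le_trans (ltW c0) cC.
- have := absv_dist (a * n%:R) (- b k).
  by rewrite opprK (absvN habs) (absvM habs) (absv_nat habs) => /ler_normlP[]; lra.
Qed.

Lemma M2_Ab_not_bi_lipschitz (A : 'M[H]_(m, d)) b :
  ~ bi_lipschitz absH (M2_Ab absH conjH A b).
Proof.
have [/existsP[k /existsP[j Akj_nz]] | /existsPn A0] :=
  boolP [exists k, exists j, conjH (A k j) != 0].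
  exact: M2_Ab_not_bi_lipschitz_nz Akj_nz.
apply: const_not_bi_lipschitz => x y k; congr (absH (_ + _) ^+ 2).
rewrite /Hinner; apply: eq_bigr => i _.
by move/existsPn: (A0 k) => /(_ i) /negPn /eqP ->; rewrite !mul0r.
Qed.

End AbsoluteValue.

Lemma absR_value (R : realType) : abs_value (@absR R).
Proof.
split; rewrite /absR.
- exact: normr_ge0.
- exact: normrN.
- exact: ler_normD.
- exact: normrM.
- by move=> n; rewrite normr_nat.
- by move=> z; rewrite normr_gt0.
Qed.

Lemma absC_value (R : realType) : abs_value (@absC R).
Proof.
(* [Rcomplex R] is [R[i]] normed over [R] by [Normc.normc], i.e. by [absC]. *)
split; rewrite /absC.
- exact: (@normr_ge0 _ (Rcomplex R)).
- exact: (@normrN _ (Rcomplex R)).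
- exact: (@ler_normD _ (Rcomplex R)).
- exact: Normc.normcM.
- by move=> n; rewrite normcMn Normc.normc1.
- by move=> z; rewrite (@normr_gt0 _ (Rcomplex R)).
Qed.

Theorem proposition4p2 (R : realType) (m d : nat) (hd : (0 < d)%N) :
  (forall (A : 'M[R]_(m, d)) (b : 'I_m -> R),
      ~ @bi_lipschitz R R (@absR R) m d (@M_Ab R R (@absR R) (@conjR R) m d A b) /\
      ~ @bi_lipschitz R R (@absR R) m d (@M2_Ab R R (@absR R) (@conjR R) m d A b)) /\
  (forall (A : 'M[R[i]]_(m, d)) (b : 'I_m -> R[i]),
      ~ @bi_lipschitz R R[i] (@absC R) m d (@M_Ab R R[i] (@absC R) (@conjC R) m d A b) /\
      ~ @bi_lipschitz R R[i] (@absC R) m d (@M2_Ab R R[i] (@absC R) (@conjC R) m d A b)).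
Proof.
have hR := absR_value R; have hC := absC_value R.
split=> A b; split.
- exact: M_Ab_not_bi_lipschitz.
- exact: M2_Ab_not_bi_lipschitz.
- exact: M_Ab_not_bi_lipschitz.
- exact: M2_Ab_not_bi_lipschitz.
Qed.
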